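(* Let $C\in\mathcal R_{\rm dec}$ with $|C|\ge2$ and root share decomposition $C=C_1\circ_kC_2$, where $C_1,C_2$ are decorated by inheritance from $C$ and each is labeled by its own intersection order. Let $d,d_1,d_2$ be the decorations of the base chords of $C,C_1,C_2$ respectively. Then for every integer $l$ with $1<l<b(C)$, $$\hat a_C\,a_{d,\,b(C)-l}=\hat a_{C_1}\,a_{d_1,\,b(C_1)-1}\;\hat a_{C_2}\,a_{d_2,\,b(C_2)-l+1}.$$
   Context: Fix a commutative ring $A$ and elements $a_{k,i}\in A$ ($k\ge1$, $i\ge0$). Chord diagrams. A rooted chord diagram of size $n$ is a fixed-point-free involution $C$ of $\{1,\dots,2n\}$, viewed as $n$ chords (transpositions) $(x\,y)$ with $x<y$; the chord containing $1$ is the root chord; $|C|=n$. Chords $(x\,y),(x'\,y')$ cross if $x<x'<y<y'$ or $x'<x<y'<y$. $C$ is connected if the graph whose vertices are the chords, with edges joining crossing chords, is connected. For a set of $m$ chords with $2m$ distinct positive integer endpoints, $\mathrm{norm}$ of it is the chord diagram on $\{1,\dots,2m\}$ obtained by replacing each endpoint by its rank among the $2m$ endpoints. Intersection order. The chords of a rooted connected chord diagram of size $n$ are labeled $1,\dots,n$ recursively: the root chord gets the first available label; the remaining chords split into connected components (w.r.t. crossing); the components are processed in increasing order of their smallest endpoint, each regarded as a rooted connected chord diagram rooted at its chord with smallest endpoint and labeled recursively with the next block of consecutive labels. ''Chord $i$'' means the chord with label $i$. Terminal and base chords. Chord $i$ is terminal if it crosses no chord $j$ with $j>i$. If $t_0<t_1<\dots<t_m$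 are the terminal labels, the base chord is $b(C)=t_0$. Insertion of chord diagrams. For $C$ of size $n$ with chords $(x_1y_1),\dots,(x_ny_n)$, root $(x_1y_1)$ ($x_1=1$), $D$ of size $m$ with chords $(x'_iy'_i)$, and $1\le k\le 2m-1$, $C\circ_kD$ is the chord diagram of size $n+m$ with chords $(1,y_1+k)$, $(x_i+k,y_i+k)$ ($2\le i\le n$), $(H(x'_i),H(y'_i))$ ($1\le i\le m$), where $H(x)=x+1$ if $x\le k$ and $H(x)=x+2n$ otherwise. Root share decomposition. For rooted connected $C$ with $|C|\ge2$, let $C_1$ be the connected component (of the chords other than the root) having the smallest endpoint among such components. There is a unique $i$ with $C=C'\circ_iC''$, where $C'=\mathrm{norm}(C\setminus C_1)$, $C''=\mathrm{norm}(C_1)$. (In the lemma, $C_1$ denotes $C'$ and $C_2$ denotes $C''$.) Decorations. A decorated chord diagram is a rooted connected chord diagram with a positive integer $d_i$ on each chord $i$; $\mathcal R_{\rm dec}$ is the set of all of them. Monomial. With terminal labels $t_0<\dots<t_m$, $\hat a_C=\prod_{c=1}^m a_{d_{t_c},t_c-t_{c-1}}\cdot\prod_{i\text{ non-terminal}}a_{d_i,0}$. *)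

From HB Require Import structures.
From mathcomp Require Import all_boot all_order all_algebra.
Set Implicit Arguments. Unset Strict Implicit. Unset Printing Implicit Defensive.
Import GRing.Theory.

(* A decorated chord is ((x, y), d): endpoints x < y and decoration d.
   A (decorated) chord diagram is a list of such chords (order of the list
   is irrelevant). *)
Definition dchord := ((nat * nat) * nat)%type.
Definition lo (c : dchord) : nat := c.1.1.
Definition hi (c : dchord) : nat := c.1.2.
Definition deco (c : dchord) : nat := c.2.

Definition endpoints (D : seq dchord) : seq nat :=
  flatten [seq [:: lo c; hi c] | c <- D].

Definition is_diagram (D : seq dchord) : bool :=
  all (fun c => lo c < hi c) D && perm_eq (endpoints D) (iota 1 (2 * size D)).

Definition cross (c c' : dchord) : bool :=
  ((lo c < lo c') && (lo c' < hi c) && (hi c < hi c')) ||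
  ((lo c' < lo c) && (lo c < hi c') && (hi c' < hi c)).

Definition sortlo (D : seq dchord) : seq dchord :=
  sort (fun c c' => lo c <= lo c') D.

Fixpoint grow (n : nat) (D S : seq dchord) : seq dchord :=
  if n is n'.+1 then grow n' D [seq e <- D | (e \in S) || has (cross e) S]
  else S.

Definition comp (D : seq dchord) (c : dchord) : seq dchord :=
  grow (size D) D [:: c].

Fixpoint components (fuel : nat) (D : seq dchord) : seq (seq dchord) :=
  match fuel with
  | 0 => [::]
  | f.+1 =>
    match sortlo D with
    | [::] => [::]
    | c :: _ => let K := comp D c in K :: components f [seq e <- D | e \notin K]
    end
  end.

Definition connected (D : seq dchord) : bool :=
  match sortlo D with
  | [::] => false
  | r :: _ => all (fun e => e \in comp D r) D
  end.

Definition is_Rdec (D : seq dchord) : bool :=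
  [&& is_diagram D, uniq D, connected D & all (fun c => 0 < deco c) D].

(* intersection order: the chords listed in label order 1, 2, ..., n *)
Fixpoint ordr (fuel : nat) (D : seq dchord) : seq dchord :=
  match fuel with
  | 0 => [::]
  | f.+1 =>
    match sortlo D with
    | [::] => [::]
    | r :: rest => r :: flatten [seq ordr f K | K <- components (size rest) rest]
    end
  end.

Definition labeled (D : seq dchord) : seq dchord := ordr (size D) D.

Definition dummy : dchord := ((0, 0), 0).

(* chord with label i (1-based) *)
Definition chord_lab (D : seq dchord) (i : nat) : dchord :=
  nth dummy (labeled D) i.-1.

Definition dec_lab (D : seq dchord) (i : nat) : nat := deco (chord_lab D i).

Definition terminal (D : seq dchord) (i : nat) : bool :=
  ~~ has (fun j => cross (chord_lab D i) (chord_lab D j)) (iota i.+1 (size D - i)).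

Definition terminals (D : seq dchord) : seq nat :=
  [seq i <- iota 1 (size D) | terminal D i].

Definition base (D : seq dchord) : nat := head 0 (terminals D).

Definition base_deco (D : seq dchord) : nat := dec_lab D (base D).

Definition ahat (A : comPzRingType) (a : nat -> nat -> A) (D : seq dchord) : A :=
  let ts := terminals D in
  (\prod_(p <- zip (behead ts) ts) a (dec_lab D p.1) (p.1 - p.2)%N) *
  (\prod_(i <- iota 1 (size D) | ~~ terminal D i) a (dec_lab D i) 0).

Definition rank (D : seq dchord) (x : nat) : nat :=
  (count (fun e => e < x) (endpoints D)).+1.

Definition norm (D : seq dchord) : seq dchord :=
  [seq ((rank D (lo c), rank D (hi c)), deco c) | c <- D].

Definition first_comp (D : seq dchord) : seq dchord :=
  let rest := behead (sortlo D) in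
  head [::] (components (size rest) rest).

Definition rsd1 (D : seq dchord) : seq dchord :=
  norm [seq e <- D | e \notin first_comp D].

Definition rsd2 (D : seq dchord) : seq dchord :=
  norm (first_comp D).

From Pilot Require Import Defs.
From HB Require Import structures.
From mathcomp Require Import all_boot all_order all_algebra.
From mathcomp Require Import zify.
Import GRing.Theory.

Set Implicit Arguments. Unset Strict Implicit. Unset Printing Implicit Defensive.

(* In intersection order the chords of C are: the root, then the first
   component C_2, then the remaining chords, which are the non-root chords of
   C_1 in their own intersection order.  No chord of C_2 crosses a chord after
   C_2, so terminality and decorations are inherited blockwise, and
   normalising endpoints changes neither crossings nor the order of left
   endpoints.
   Regard l as a virtual terminal placed before the base chord: then
   \hat a_C a_{d,b(C)-l} is the product over all labels i of a_{d_i, i - t}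
   at a terminal i with preceding terminal t (or l), and of a_{d_i, 0} at a
   non-terminal i.  Such a product factors along consecutive blocks ending in
   a terminal chord.  The root is non-terminal since b(C) > l > 1, and the
   last chord of C_2 is terminal, which splits the product into exactly the
   right-hand side. *)

(** * Crossing closure *)

Lemma count_subpred_eq (T : eqType) (a b : pred T) (s : seq T) :
  subpred a b -> count a s = count b s -> {in s, subpred b a}.
Proof.
move=> ab; elim: s => //= x s IHs eq_ab y.
have le_s := sub_count ab s.
have le_x : a x <= b x by case: (a x) (ab x) => // ->.
rewrite inE => /orP[/eqP-> bx | ys]; last by apply: IHs => //; lia.
by move: le_x eq_ab; rewrite bx; case: (a x) => //=; lia.
Qed.

Section KleeneIteration.
Variables (T : eqType) (D : seq T) (F : seq T -> seq T).
Hypothesis F_sub : forall S, {subset F S <= D}.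
Hypothesis F_extensive : forall S, {subset S <= D} -> {subset S <= F S}.
Hypothesis F_mono : forall S S', {subset S <= S'} -> {subset F S <= F S'}.

Lemma iter_size_fixpoint S : {subset S <= D} ->
  {subset F (iter (size D) F S) <= iter (size D) F S}.
Proof.
move=> SD; pose X k := iter k F S.
have XD k : {subset X k <= D} by case: k => [|k] //; apply: F_sub.
have XS k : {subset X k <= X k.+1} by apply: F_extensive.
pose stable k := {subset F (X k) <= X k}.
have stableS k : stable k -> stable k.+1 by apply: F_mono.
pose mu k := count (mem (X k)) D.
have grow_or_stable k : k <= mu k \/ stable k.
  elim: k => [|k [le_k | st]]; [by left | | by right; apply: stableS].
  have := sub_count (XS k) D; rewrite leq_eqVlt => /orP[/eqP eq_mu | lt_mu].
    right; apply: stableS => x Xx.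
    by apply: (count_subpred_eq (XS k) eq_mu) => //; exact: (XD k.+1).
  by left; apply: leq_ltn_trans lt_mu.
case: (grow_or_stable (size D)) => // le_D x /F_sub.
have /allP : all (mem (X (size D))) D by rewrite all_count eqn_leq count_size.
exact.
Qed.

End KleeneIteration.

Definition grow_step (D S : seq dchord) : seq dchord :=
  [seq e <- D | (e \in S) || has (cross e) S].

Lemma grow_iter n D S : grow n D S = iter n (grow_step D) S.
Proof. by elim: n S => [|n IHn] S //=; rewrite IHn -iterSr. Qed.

Lemma grow_step_sub D S : {subset grow_step D S <= D}.
Proof. by move=> z; rewrite mem_filter => /andP[]. Qed.

Lemma grow_step_extensive D S : {subset S <= D} -> {subset S <= grow_step D S}.
Proof. by move=> SD z zS; rewrite mem_filter zS SD. Qed.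

Lemma grow_step_mono D S S' :
  {subset S <= S'} -> {subset grow_step D S <= grow_step D S'}.
Proof.
move=> SS' z; rewrite !mem_filter => /andP[/orP[/SS' -> // | /hasP[w /SS' wS' czw]] ->].
by rewrite andbT; apply/orP; right; apply/hasP; exists w.
Qed.

(* [Defs.comp] is qualified because [comp] is ssrfun's function composition. *)
Lemma comp_sub D c : c \in D -> {subset Defs.comp D c <= D}.
Proof.
rewrite /Defs.comp grow_iter => cD; case: (size D) => [|n] z /=; last exact: grow_step_sub.
by rewrite inE => /eqP->.
Qed.

Lemma mem_comp D c : c \in D -> c \in Defs.comp D c.
Proof.
move=> cD; rewrite /Defs.comp grow_iter; elim: (size D) => [|n IHn]; first exact: mem_head.
by rewrite iterS mem_filter IHn cD.
Qed.

Lemma comp_closed D c x y :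
  c \in D -> y \in D -> x \in Defs.comp D c -> cross y x -> y \in Defs.comp D c.
Proof.
rewrite /Defs.comp grow_iter => cD yD xK cyx.
apply: (iter_size_fixpoint (@grow_step_sub D) (@grow_step_extensive D) (@grow_step_mono D)).
  by move=> z; rewrite inE => /eqP->.
by rewrite mem_filter yD andbT; apply/orP; right; apply/hasP; exists x.
Qed.

(** * Components and intersection order *)

Lemma comp_filter D c : c \in D ->
  Defs.comp D c = [seq e <- D | e \in Defs.comp D c].
Proof.
case: D => // d D _; rewrite /Defs.comp grow_iter [size _]/= iterS {1}/grow_step.
by apply: eq_in_filter => e eD; rewrite mem_filter eD andbT.
Qed.

Lemma comp_subseq D c : c \in D -> subseq (Defs.comp D c) D.
Proof. by move=> cD; rewrite comp_filter // filter_subseq. Qed.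

Lemma size_comp_rest D c : c \in D ->
  size [seq e <- D | e \notin Defs.comp D c] < size D.
Proof.
move=> cD; set K := Defs.comp D c.
have K_D : 0 < count (mem K) D.
  by rewrite -has_count; apply/hasP; exists c => //; exact: mem_comp.
rewrite size_filter -(count_predC (mem K) D).
have -> : count (fun e => e \notin K) D = count (predC (mem K)) D by [].
lia.
Qed.

Lemma sortlo_perm D : perm_eq (sortlo D) D.
Proof. by rewrite /sortlo perm_sort. Qed.

Lemma sortlo_nil D : sortlo D = [::] -> D = [::].
Proof. by move=> D0; apply/nilP; rewrite /nilp -(perm_size (sortlo_perm D)) D0. Qed.

Lemma mem_head_sortlo D c s : sortlo D = c :: s -> c \in D.
Proof. by move=> Ds; rewrite -(perm_mem (sortlo_perm D)) Ds mem_head. Qed.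

Lemma components_unfold n D : components n.+1 D =
  if sortlo D is c :: _ then
    Defs.comp D c :: components n [seq e <- D | e \notin Defs.comp D c]
  else [::].
Proof. by []. Qed.

Lemma ordr_unfold n D : ordr n.+1 D =
  if sortlo D is r :: rest then
    r :: flatten [seq ordr n K | K <- components (size rest) rest]
  else [::].
Proof. by []. Qed.

Lemma components_subseq n D K : K \in components n D -> subseq K D.
Proof.
elim: n D => [|n IHn] D //; rewrite components_unfold.
case Ds: (sortlo D) => [|c s] //; have cD := mem_head_sortlo Ds.
rewrite inE => /orP[/eqP-> | /IHn KD]; first exact: comp_subseq.
exact: subseq_trans KD (filter_subseq _ _).
Qed.

Lemma components_perm n D : size D <= n -> perm_eq (flatten (components n D)) D.
Proof.
elim: n D => [|n IHn] D; first by rewrite leqn0 => /nilP->.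
move=> sizeD; rewrite components_unfold.
case Ds: (sortlo D) => [|c s]; first by rewrite (sortlo_nil Ds).
have cD := mem_head_sortlo Ds.
set K := Defs.comp D c.
have split_D : perm_eq ([seq e <- D | e \in K] ++ [seq e <- D | e \notin K]) D.
  by rewrite perm_filterC.
apply: (perm_trans _ split_D).
rewrite /= -comp_filter // perm_cat2l.
by apply: IHn; rewrite -ltnS (leq_trans (size_comp_rest cD)).
Qed.

Lemma components_fuel n m D : size D <= n -> size D <= m ->
  components n D = components m D.
Proof.
elim: n m D => [|n IHn] m D; first by rewrite leqn0 => /nilP->; case: m.
case: m => [|m] sizeDn; first by rewrite leqn0 => /nilP->.
move=> sizeDm; rewrite !components_unfold.
case Ds: (sortlo D) => [|c s] //; have lt_rest := size_comp_rest (mem_head_sortlo Ds).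
by congr (_ :: _); apply: IHn; rewrite -ltnS (leq_trans lt_rest).
Qed.

Lemma ordr_perm n D : size D <= n -> perm_eq (ordr n D) D.
Proof.
elim: n D => [|n IHn] D; first by rewrite leqn0 => /nilP->.
move=> sizeD; rewrite ordr_unfold.
case Ds: (sortlo D) => [|r rest]; first by rewrite (sortlo_nil Ds).
have rest_perm : perm_eq (r :: rest) D by rewrite -Ds sortlo_perm.
apply: (perm_trans _ rest_perm); rewrite perm_cons.
apply: (perm_trans _ (components_perm (leqnn _))).
have size_rest : size rest <= n by move: sizeD; rewrite -(perm_size rest_perm).
apply/permP => P; rewrite !count_flatten -map_comp; congr sumn.
apply/eq_in_map => K /components_subseq K_rest /=; apply/permP/IHn.
exact: leq_trans (size_subseq K_rest) size_rest.
Qed.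

Lemma ordr_fuel n m D : size D <= n -> size D <= m -> ordr n D = ordr m D.
Proof.
elim: n m D => [|n IHn] m D; first by rewrite leqn0 => /nilP->; case: m.
case: m => [|m] sizeDn; first by rewrite leqn0 => /nilP->.
move=> sizeDm; rewrite !ordr_unfold.
case Ds: (sortlo D) => [|r rest] //.
have size_rest : size rest < size D by rewrite -(perm_size (sortlo_perm D)) Ds.
congr (_ :: flatten _); apply/eq_in_map => K /components_subseq/size_subseq K_rest.
by apply: IHn; [exact: leq_trans K_rest (leq_trans size_rest sizeDn) |
                exact: leq_trans K_rest (leq_trans size_rest sizeDm)].
Qed.

Lemma size_labeled D : size (labeled D) = size D.
Proof. exact/perm_size/ordr_perm. Qed.

Lemma mem_labeled D : labeled D =i D.
Proof. exact/perm_mem/ordr_perm. Qed.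

(** * Invariance under normalisation *)

Lemma eq_in_sort (T : eqType) (r1 r2 : rel T) (s : seq T) :
  {in s &, r1 =2 r2} -> sort r1 s = sort r2 s.
Proof.
move=> r12; have [t ->] := all_sigP (allss s).
rewrite sort_map; apply: (map_sort (f := sval)) => x y /=.
by rewrite r12 ?(svalP x) ?(svalP y).
Qed.

Section ChordIsomorphism.
Variables (f : dchord -> dchord) (E : seq dchord).
Hypothesis f_lo : {in E &, forall x y, (lo (f x) <= lo (f y)) = (lo x <= lo y)}.
Hypothesis f_cross : {in E &, forall x y, cross (f x) (f y) = cross x y}.
Hypothesis f_inj : {in E &, injective f}.

Lemma mem_map_iso S e : {subset S <= E} -> e \in E -> (f e \in map f S) = (e \in S).
Proof.
move=> SE eE; apply/mapP/idP => [[x xS /f_inj-> //] | eS]; [exact: SE | by exists e].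
Qed.

Lemma sortlo_map D : {subset D <= E} -> sortlo (map f D) = map f (sortlo D).
Proof.
move=> DE; rewrite /sortlo sort_map; congr map.
by apply: eq_in_sort => x y xD yD; exact: f_lo (DE _ xD) (DE _ yD).
Qed.

Lemma grow_step_map D S : {subset D <= E} -> {subset S <= E} ->
  grow_step (map f D) (map f S) = map f (grow_step D S).
Proof.
move=> DE SE; rewrite /grow_step filter_map; congr map.
apply: eq_in_filter => e eD /=; rewrite mem_map_iso ?DE // has_map.
by congr (_ || _); apply: eq_in_has => x xS; exact: f_cross (DE _ eD) (SE _ xS).
Qed.

Lemma comp_map D c : {subset D <= E} -> c \in D ->
  Defs.comp (map f D) (f c) = map f (Defs.comp D c).
Proof.
move=> DE cD; rewrite /Defs.comp !grow_iter size_map.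
elim: (size D) => [|n IHn] //=; rewrite IHn grow_step_map //.
case: n {IHn} => [z|n z /grow_step_sub]; last exact: DE.
by rewrite inE => /eqP->; exact: DE.
Qed.

Lemma components_map n D : {subset D <= E} ->
  components n (map f D) = map (map f) (components n D).
Proof.
elim: n D => [|n IHn] D DE //; rewrite !components_unfold sortlo_map //.
case Ds: (sortlo D) => [|c s] //=; have cD := mem_head_sortlo Ds.
rewrite comp_map // -IHn => [|x]; last by rewrite mem_filter => /andP[_ /DE].
congr (_ :: components n _); rewrite filter_map; congr map.
by apply: eq_in_filter => e eD /=; rewrite mem_map_iso ?DE // => x /(comp_sub cD)/DE.
Qed.

Lemma ordr_map n D : {subset D <= E} -> ordr n (map f D) = map f (ordr n D).
Proof.
elim: n D => [|n IHn] D DE //; rewrite !ordr_unfold sortlo_map //.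
case Ds: (sortlo D) => [|r rest] //=.
have restE : {subset rest <= E}.
  by move=> x xr; apply: DE; rewrite -(perm_mem (sortlo_perm D)) Ds inE xr orbT.
rewrite size_map components_map // map_flatten -!map_comp.
congr (_ :: flatten _); apply/eq_in_map => K /components_subseq K_rest /=.
by apply: IHn => x /(mem_subseq K_rest)/restE.
Qed.

End ChordIsomorphism.

Definition norm_chord (D : seq dchord) (c : dchord) : dchord :=
  ((rank D (lo c), rank D (hi c)), deco c).

Lemma lo_endpoint D c : c \in D -> lo c \in endpoints D.
Proof. by move=> cD; apply/flatten_mapP; exists c; rewrite ?mem_head. Qed.

Lemma hi_endpoint D c : c \in D -> hi c \in endpoints D.
Proof. by move=> cD; apply/flatten_mapP; exists c; rewrite ?inE ?eqxx ?orbT. Qed.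

Lemma rank_le D x y : x <= y -> rank D x <= rank D y.
Proof. by move=> le_xy; rewrite ltnS; apply: sub_count => e /leq_trans; apply. Qed.

Lemma rank_lt D x y : x \in endpoints D -> x < y -> rank D x < rank D y.
Proof.
move=> xE lt_xy; rewrite /rank ltnS; set E := endpoints D.
have x_once : 0 < count (pred1 x) E by rewrite -has_count; apply/hasP; exists x => /=.
have disjoint : count (predI (fun e => e < x) (pred1 x)) E = 0.
  rewrite (@eq_count _ _ pred0) ?count_pred0 // => e /=.
  by case: eqP => [->|]; rewrite ?ltnn ?andbF.
have below_y : count (predU (fun e => e < x) (pred1 x)) E <= count (fun e => e < y) E.
  by apply: sub_count => e /= /orP[/ltn_trans-> // | /eqP->].
have := count_predUI (fun e => e < x) (pred1 x) E; rewrite disjoint addn0 => count_le_x.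
rewrite count_le_x in below_y; apply: leq_trans below_y.
by rewrite -addn1 leq_add2l.
Qed.

Lemma rank_leE D : {in endpoints D &, {mono rank D : x y / x <= y}}.
Proof.
move=> x y xE yE; case: (leqP x y) => [le_xy | lt_yx]; first exact: rank_le.
by apply: negbTE; rewrite -ltnNge rank_lt.
Qed.

Lemma rank_ltE D : {in endpoints D &, {mono rank D : x y / x < y}}.
Proof. by move=> x y xE yE; rewrite ltnNge rank_leE // -ltnNge. Qed.

Lemma rank_inj D : {in endpoints D &, injective (rank D)}.
Proof.
move=> x y xE yE eq_r; apply/eqP.
by rewrite eqn_leq -(rank_leE xE yE) -(rank_leE yE xE) eq_r leqnn.
Qed.

Lemma norm_chord_lo D :
  {in D &, forall x y, (lo (norm_chord D x) <= lo (norm_chord D y)) = (lo x <= lo y)}.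
Proof. by move=> x y xD yD; rewrite rank_leE ?lo_endpoint. Qed.

Lemma norm_chord_cross D :
  {in D &, forall x y, cross (norm_chord D x) (norm_chord D y) = cross x y}.
Proof.
move=> x y xD yD; have := (lo_endpoint xD, lo_endpoint yD, hi_endpoint xD, hi_endpoint yD).
by case=> -[[lx ly] hx] hy; rewrite /cross /= !rank_ltE.
Qed.

Lemma norm_chord_inj D : {in D &, injective (norm_chord D)}.
Proof.
move=> c1 c2 c1D c2D eq_nf.
have eq_lo := rank_inj (lo_endpoint c1D) (lo_endpoint c2D) (congr1 lo eq_nf).
have eq_hi := rank_inj (hi_endpoint c1D) (hi_endpoint c2D) (congr1 hi eq_nf).
move: c1 c2 {c1D c2D} eq_nf eq_lo eq_hi => [[? ?] ?] [[? ?] ?] [_ _ ->].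
by rewrite /lo /hi /= => -> ->.
Qed.

Lemma labeled_norm D : labeled (norm D) = map (norm_chord D) (labeled D).
Proof.
rewrite /labeled size_map.
exact: (ordr_map (@norm_chord_lo D) (@norm_chord_cross D) (@norm_chord_inj D)).
Qed.

(** * Labels of a list in intersection order *)

Definition chordL (L : seq dchord) (i : nat) : dchord := nth dummy L i.-1.

Definition decL (L : seq dchord) (i : nat) : nat := deco (chordL L i).

Definition terminalL (L : seq dchord) (i : nat) : bool :=
  ~~ has (fun j => cross (chordL L i) (chordL L j)) (iota i.+1 (size L - i)).

Definition terminalsL (L : seq dchord) : seq nat :=
  [seq i <- iota 1 (size L) | terminalL L i].

Definition baseL (L : seq dchord) : nat := head 0 (terminalsL L).

Lemma terminalE D : terminal D = terminalL (labeled D).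
Proof. by rewrite /terminal /terminalL size_labeled. Qed.

Lemma terminalsE D : terminals D = terminalsL (labeled D).
Proof. by rewrite /terminals /terminalsL terminalE size_labeled. Qed.

Lemma baseE D : base D = baseL (labeled D).
Proof. by rewrite /base terminalsE. Qed.

Lemma terminalL_map g (L : seq dchord) :
  {in L &, forall x y, cross (g x) (g y) = cross x y} -> terminalL (map g L) =1 terminalL L.
Proof.
move=> g_cross i; rewrite /terminalL size_map.
case: (ltnP i.-1 (size L)) => [lt_iL | le_Li]; last first.
  by have -> : (size L - i = 0)%N by lia.
congr negb; apply: eq_in_has => j; rewrite mem_iota => /andP[lt_ij lt_j] /=.
have lt_jL : (j.-1 < size L)%N by lia.
by rewrite /chordL !(nth_map dummy) // g_cross // mem_nth.
Qed.

Lemma decL_map g (L : seq dchord) : {in L, forall x, deco (g x) = deco x} ->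
  decL (map g L) =1 decL L.
Proof.
move=> g_deco i; rewrite /decL /chordL.
case: (ltnP i.-1 (size L)) => iL; last by rewrite !nth_default ?size_map.
by rewrite (nth_map dummy) // g_deco // mem_nth.
Qed.

Lemma dec_labE D : dec_lab D = decL (labeled D).
Proof. by []. Qed.

Lemma iota_rcons m n : iota m n.+1 = rcons (iota m n) (m + n).
Proof. by rewrite -addn1 iotaD cats1. Qed.

Lemma chordL_cons x L i : 0 < i -> chordL (x :: L) i.+1 = chordL L i.
Proof. by case: i. Qed.

Lemma chordL_cat_l L L' i : 0 < i <= size L -> chordL (L ++ L') i = chordL L i.
Proof. by case: i => // i /= lt_iL; rewrite /chordL /= nth_cat lt_iL. Qed.

Lemma chordL_cat_r L L' j : 0 < j -> chordL (L ++ L') (size L + j) = chordL L' j.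
Proof. by case: j => // j _; rewrite /chordL addnS /= nth_cat ltnNge leq_addr addKn. Qed.

Lemma mem_chordL L i : 0 < i <= size L -> chordL L i \in L.
Proof. by case: i => // i /= lt_iL; rewrite mem_nth. Qed.

Lemma terminalL_last L : terminalL L (size L).
Proof. by rewrite /terminalL subnn. Qed.

Lemma terminalL_cons x L i : 0 < i -> terminalL (x :: L) i.+1 = terminalL L i.
Proof.
move=> i_gt0; rewrite /terminalL chordL_cons //.
have -> : iota i.+2 (size (x :: L) - i.+1) = map (addn 1) (iota i.+1 (size L - i)).
  by rewrite -iotaDl.
rewrite has_map; congr negb; apply: eq_in_has => j.
by rewrite mem_iota => /andP[lt_ij _] /=; rewrite add1n chordL_cons //; lia.
Qed.

Lemma terminalL_cat_r L L' j : 0 < j -> terminalL (L ++ L') (size L + j) = terminalL L' j.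
Proof.
move=> j_gt0; rewrite /terminalL chordL_cat_r //.
have -> : iota (size L + j).+1 (size (L ++ L') - (size L + j)) =
          map (addn (size L)) (iota j.+1 (size L' - j)).
  by rewrite -iotaDl size_cat subnDl addnS.
rewrite has_map; congr negb; apply: eq_in_has => k.
by rewrite mem_iota => /andP[lt_jk _] /=; rewrite chordL_cat_r //; lia.
Qed.

Lemma decL_cons x (L : seq dchord) i : 0 < i -> decL (x :: L) i.+1 = decL L i.
Proof. by move=> i_gt0; rewrite /decL chordL_cons. Qed.

Lemma decL_cat_l (L L' : seq dchord) : {in iota 1 (size L), decL (L ++ L') =1 decL L}.
Proof. by move=> i; rewrite mem_iota /decL => iL; rewrite chordL_cat_l //; lia. Qed.

Lemma decL_cat_r (L L' : seq dchord) j : 0 < j -> decL (L ++ L') (size L + j) = decL L' j.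
Proof. by move=> j_gt0; rewrite /decL chordL_cat_r. Qed.

Lemma terminalL_cat_l (L L' : seq dchord) : {in L & L', forall x y, ~~ cross x y} ->
  {in iota 1 (size L), terminalL (L ++ L') =1 terminalL L}.
Proof.
move=> no_cross i; rewrite mem_iota => /andP[i_gt0 lt_i]; have le_iL : i <= size L by lia.
rewrite /terminalL size_cat -addnBAC // iotaD has_cat chordL_cat_l ?i_gt0 //.
have -> : has (fun j => cross (chordL L i) (chordL (L ++ L') j))
              (iota (i.+1 + (size L - i)) (size L')) = false.
  have -> : i.+1 + (size L - i) = (size L).+1 by lia.
  apply/negbTE/hasPn => j; rewrite mem_iota => /andP[lt_Lj lt_j].
  rewrite -(subnKC (ltnW lt_Lj)) chordL_cat_r ?subn_gt0 //.
  by apply: no_cross; apply: mem_chordL; lia.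
rewrite orbF; congr negb; apply: eq_in_has => j; rewrite mem_iota => /andP[lt_ij lt_j] /=.
by rewrite chordL_cat_l //; lia.
Qed.

Lemma mem_terminalsL_size (L : seq dchord) : 0 < size L -> size L \in terminalsL L.
Proof. by move=> L_gt0; rewrite mem_filter terminalL_last mem_iota; lia. Qed.

Lemma terminalsL_cons x (L : seq dchord) : ~~ terminalL (x :: L) 1 ->
  terminalsL (x :: L) = map succn (terminalsL L).
Proof.
move=> root_nt; rewrite /terminalsL /= (negbTE root_nt) -add1n iotaDl filter_map.
congr map; apply: eq_in_filter => i.
by rewrite mem_iota => /andP[i_gt0 _] /=; rewrite terminalL_cons.
Qed.

Lemma terminalsL_cat (L L' : seq dchord) : {in L & L', forall x y, ~~ cross x y} ->
  terminalsL (L ++ L') = terminalsL L ++ map (addn (size L)) (terminalsL L').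
Proof.
move=> no_cross; rewrite /terminalsL size_cat iotaD filter_cat.
congr (_ ++ _); first exact: eq_in_filter (terminalL_cat_l no_cross).
rewrite addnC iotaDl filter_map; congr map; apply: eq_in_filter => j.
by rewrite mem_iota => /andP[j_gt0 _] /=; rewrite terminalL_cat_r.
Qed.

Lemma baseL_root_share r (L2 L1 : seq dchord) : {in L2 & L1, forall x y, ~~ cross x y} ->
  0 < size L2 -> ~~ terminalL (r :: L2 ++ L1) 1 -> baseL (r :: L2 ++ L1) = (baseL L2).+1.
Proof.
move=> no_cross L2_gt0 root_nt; rewrite /baseL terminalsL_cons // terminalsL_cat //.
by case: (terminalsL L2) (mem_terminalsL_size L2_gt0).
Qed.

(** * Monomials *)

Section Monomials.
Variables (A : comPzRingType) (a : nat -> nat -> A).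
Local Open Scope ring_scope.

Fixpoint gapprod (term : pred nat) (dec : nat -> nat) (p : nat) (s : seq nat) : A :=
  if s is i :: s' then
    if term i then a (dec i) (i - p) * gapprod term dec i s'
    else a (dec i) 0 * gapprod term dec p s'
  else 1.

Lemma gapprod_cat term dec p s1 s2 :
  gapprod term dec p (s1 ++ s2) =
  gapprod term dec p s1 * gapprod term dec (last p (filter term s1)) s2.
Proof.
elim: s1 p => [|i s1 IHs1] p /=; first by rewrite mul1r.
by case: (term i); rewrite IHs1 mulrA.
Qed.

Lemma gapprod_shift term dec k p s :
  gapprod term dec (k + p) (map (addn k) s) =
  gapprod (fun i => term (k + i)) (fun i => dec (k + i)) p s.
Proof. by elim: s p => [|i s IHs] p //=; case: (term _); rewrite IHs ?subnDl. Qed.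

Lemma eq_in_gapprod term term' dec dec' p s :
  {in s, term =1 term'} -> {in s, dec =1 dec'} ->
  gapprod term dec p s = gapprod term' dec' p s.
Proof.
elim: s p => [|i s IHs] p //= eq_term eq_dec.
rewrite eq_term ?eq_dec ?mem_head //; case: (term' i); congr (_ * _);
  by apply: IHs => j js; [apply: eq_term | apply: eq_dec]; rewrite inE js orbT.
Qed.

Lemma gapprod_split term dec p s :
  gapprod term dec p s =
  gapprod xpredT dec p (filter term s) * \prod_(i <- s | ~~ term i) a (dec i) 0.
Proof.
elim: s p => [|i s IHs] p /=; first by rewrite big_nil mulr1.
by rewrite big_cons; case: (term i); rewrite IHs /=; [exact: mulrA | exact: mulrCA].
Qed.

Lemma prod_consecutive dec x s :
  \prod_(q <- zip s (x :: s)) a (dec q.1) (q.1 - q.2)%N = gapprod xpredT dec x s.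
Proof. by elim: s x => [|y s IHs] x; rewrite ?big_nil // big_cons IHs. Qed.

(* [l] acts as a virtual terminal preceding the first label (see [ahat_base]). *)
Definition ahat_from (L : seq dchord) (l : nat) : A :=
  gapprod (terminalL L) (decL L) l (iota 1 (size L)).

Lemma ahat_base (D : seq dchord) l : (0 < size D)%N ->
  ahat a D * a (base_deco D) (base D - l) = ahat_from (labeled D) l.
Proof.
move=> D_gt0; rewrite /ahat_from gapprod_split -/(terminalsL _).
rewrite /ahat /base_deco dec_labE terminalsE baseE terminalE -(size_labeled D) /baseL.
have := @mem_terminalsL_size (labeled D); rewrite size_labeled => /(_ D_gt0).
case: (terminalsL (labeled D)) => [|t ts] // _.
by rewrite [behead _]/= prod_consecutive /= mulrAC [_ * a _ _]mulrC.
Qed.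

Lemma ahat_from_cons x (L : seq dchord) l : (0 < l)%N ->
  ahat_from (x :: L) l =
  a (deco x) 0 * ahat_from L (if terminalL (x :: L) 1 then 0 else l.-1).
Proof.
move=> l_gt0; rewrite /ahat_from [iota 1 _]/=.
have tail p : gapprod (terminalL (x :: L)) (decL (x :: L)) p.+1 (iota 2 (size L)) =
              gapprod (terminalL L) (decL L) p (iota 1 (size L)).
  rewrite -[p.+1]add1n -[2%N]/(1 + 1)%N iotaDl gapprod_shift.
  apply: eq_in_gapprod => i; rewrite mem_iota => /andP[i_gt0 _]; first exact: terminalL_cons.
  exact: decL_cons.
have one_sub_l : (1 - l = 0)%N by lia.
by case: ifP => root; rewrite -tail ?prednK //= root ?one_sub_l.
Qed.

Lemma last_terminalsL (L : seq dchord) p : (0 < size L)%N -> last p (terminalsL L) = size L.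
Proof.
move=> L_gt0; rewrite /terminalsL -(prednK L_gt0) iota_rcons add1n prednK //.
by rewrite filter_rcons terminalL_last last_rcons.
Qed.

Lemma ahat_from_cat (L L' : seq dchord) l : {in L & L', forall x y, ~~ cross x y} ->
  (0 < size L)%N -> ahat_from (L ++ L') l = ahat_from L l * ahat_from L' 0.
Proof.
move=> no_cross L_gt0; rewrite /ahat_from size_cat iotaD gapprod_cat.
have term_L := terminalL_cat_l no_cross.
rewrite (eq_in_filter term_L) -/(terminalsL L) last_terminalsL //.
congr (_ * _); first exact: eq_in_gapprod term_L (@decL_cat_l L L').
have -> : iota (1 + size L) (size L') = map (addn (size L)) (iota 1 (size L')).
  by rewrite addnC iotaDl.
rewrite -[X in gapprod _ _ X _]addn0 gapprod_shift.
by apply: eq_in_gapprod => j; rewrite mem_iota => /andP[j_gt0 _];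
  [exact: terminalL_cat_r | exact: decL_cat_r].
Qed.

Lemma ahat_from_root_share r (L2 L1 : seq dchord) l :
  {in L2 & L1, forall x y, ~~ cross x y} -> (0 < size L2)%N -> (0 < l)%N ->
  ~~ terminalL (r :: L2 ++ L1) 1 ->
  ahat_from (r :: L2 ++ L1) l = ahat_from (r :: L1) 1 * ahat_from L2 l.-1.
Proof.
move=> no_cross L2_gt0 l_gt0 root_nt.
by rewrite !ahat_from_cons // (negbTE root_nt) if_same ahat_from_cat // mulrA mulrAC.
Qed.

End Monomials.

(** * Root share decomposition *)

Lemma labeled_unfold D r rest : sortlo D = r :: rest ->
  labeled D = r :: flatten [seq labeled K | K <- components (size rest) rest].
Proof.
move=> Ds; rewrite /labeled -(perm_size (sortlo_perm D)) Ds ordr_unfold Ds.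
congr (_ :: flatten _); apply/eq_in_map => K /components_subseq/size_subseq K_rest.
exact: ordr_fuel.
Qed.

Lemma components_sortlo D c s : sortlo D = c :: s ->
  components (size D) D =
  Defs.comp D c :: components (size [seq e <- D | e \notin Defs.comp D c])
                              [seq e <- D | e \notin Defs.comp D c].
Proof.
move=> Ds; have cD := mem_head_sortlo Ds; have lt_rest := size_comp_rest cD.
case: (size D) (lt_rest) => // n lt_n; rewrite components_unfold Ds.
by congr (_ :: _); apply: components_fuel.
Qed.

Lemma mem_flatten_labeled n D :
  {subset flatten [seq labeled K | K <- components n D] <= D}.
Proof.
move=> y /flatten_mapP[K /components_subseq K_D]; rewrite mem_labeled.
exact: mem_subseq.
Qed.

Lemma norm_chord_cross_labeled D :
  {in labeled D &, forall x y, cross (norm_chord D x) (norm_chord D y) = cross x y}.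
Proof. by move=> x y; rewrite !mem_labeled; apply: norm_chord_cross. Qed.

Lemma ahat_from_norm (A : comPzRingType) (a : nat -> nat -> A) D l :
  ahat_from a (labeled (norm D)) l = ahat_from a (labeled D) l.
Proof.
rewrite /ahat_from labeled_norm size_map.
by apply: eq_in_gapprod => i _;
  [exact: (terminalL_map (@norm_chord_cross_labeled D)) | exact: decL_map].
Qed.

Lemma base_norm D : base (norm D) = base D.
Proof.
rewrite !baseE labeled_norm /baseL /terminalsL size_map.
by congr head; apply: eq_filter; apply: terminalL_map (@norm_chord_cross_labeled D).
Qed.

Lemma labeled_root_share C : uniq C -> (1 < size C)%N ->
  exists r L1, [/\ labeled C = r :: labeled (first_comp C) ++ L1,
                   labeled [seq e <- C | e \notin first_comp C] = r :: L1,
                   {in labeled (first_comp C) & L1, forall x y, ~~ cross x y}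
                 & (0 < size (first_comp C))%N].
Proof.
move=> uniqC C_gt1.
case Cs: (sortlo C) => [|r rest]; first by move: C_gt1; rewrite (sortlo_nil Cs).
have C_perm : perm_eq (r :: rest) C by rewrite -Cs sortlo_perm.
have r_rest : r \notin rest by move: uniqC; rewrite -(perm_uniq C_perm) => /andP[].
case rests: (sortlo rest) => [|c1 srest].
  by move: C_gt1; rewrite -(perm_size C_perm) (sortlo_nil rests).
have c1_rest := mem_head_sortlo rests.
set K1 := Defs.comp rest c1; set rest' := [seq e <- rest | e \notin K1].
have fcC : first_comp C = K1 by rewrite /first_comp Cs /= (components_sortlo rests).
have K1_rest := comp_sub c1_rest.
set L1 := flatten [seq labeled K | K <- components (size rest') rest'].
exists r, L1; rewrite fcC; split.
- by rewrite (labeled_unfold Cs) (components_sortlo rests).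
- have lo_total : total (fun c c' : dchord => lo c <= lo c').
    by move=> ? ?; exact: leq_total.
  have lo_trans : transitive (fun c c' : dchord => lo c <= lo c').
    by move=> ? ? ?; exact: leq_trans.
  apply: labeled_unfold; rewrite /sortlo -(filter_sort lo_total lo_trans) -/(sortlo C) Cs /=.
  by rewrite ifT //; apply: contra r_rest => /K1_rest.
- move=> x y; rewrite mem_labeled => xK1 /mem_flatten_labeled.
  rewrite mem_filter => /andP[yK1 y_rest]; apply: contra yK1 => cross_xy.
  by apply: (comp_closed c1_rest y_rest xK1); rewrite /cross orbC.
- by have := mem_comp c1_rest; rewrite -/K1; case: (K1).
Qed.

Local Open Scope ring_scope.

Theorem mainTheorem4 (A : comPzRingType) (a : nat -> nat -> A) (C : seq dchord) :
  is_Rdec C -> (2 <= size C)%N ->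
  forall l : nat, (1 < l < base C)%N ->
  ahat a C * a (base_deco C) (base C - l)%N =
  ahat a (rsd1 C) * a (base_deco (rsd1 C)) (base (rsd1 C) - 1)%N *
  (ahat a (rsd2 C) * a (base_deco (rsd2 C)) (base (rsd2 C) - l + 1)%N).
Proof.
move=> /and4P[_ uniqC _ _] C_gt1 l /andP[l_gt1 l_lt_base].
have [r [L1 [labC labD1 no_cross K1_gt0]]] := labeled_root_share uniqC C_gt1.
set L2 := labeled (first_comp C) in labC no_cross.
have L2_gt0 : (0 < size L2)%N by rewrite size_labeled.
have root_nt : ~~ terminalL (r :: L2 ++ L1) 1.
  apply: contraTN l_lt_base => root_t.
  by rewrite baseE labC /baseL /terminalsL /= root_t /=; lia.
have base_C : base C = (baseL L2).+1 by rewrite baseE labC baseL_root_share.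
have base2 : base (rsd2 C) = baseL L2 by rewrite /rsd2 base_norm baseE.
rewrite base2 (_ : baseL L2 - l + 1 = baseL L2 - l.-1)%N; last by lia.
have D1_gt0 : (0 < size [seq e <- C | e \notin first_comp C])%N.
  by rewrite -size_labeled labD1.
rewrite -base2 !ahat_base ?size_map ?K1_gt0 ?D1_gt0 ?(ltnW C_gt1) //.
rewrite /rsd1 /rsd2 !ahat_from_norm labC labD1 ahat_from_root_share //; lia.
Qed.
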